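(* Let $k\ge2$ be an integer. The closure of $\bar\Gamma(2)_k$ in $\mathrm{PSL}_2(\hat{\mathbb{Z}}_{\mathrm{odd}})$ is equal to $\hat D_{\mathrm{odd}}$.
   Context: $\bar\Gamma(2)=\Gamma(2)/\{\pm1\}\subset\mathrm{PSL}_2(\mathbb{Z})$; its lower central series is $\bar\Gamma(2)_1=\bar\Gamma(2)$, $\bar\Gamma(2)_{k+1}=[\bar\Gamma(2)_k,\bar\Gamma(2)]$. Let $\hat{\mathbb{Z}}_{\mathrm{odd}}=\varprojlim_{n\text{ odd}}\mathbb{Z}/n\mathbb{Z}\cong\prod_{p\ne2}\mathbb{Z}_p$, and view $\mathrm{PSL}_2(\mathbb{Z})\subset\mathrm{PSL}_2(\hat{\mathbb{Z}}_{\mathrm{odd}})$ with its profinite topology. $D_3\subset\mathrm{PSL}_2(\mathbb{Z}/3\mathbb{Z})$ is the index-$3$ Klein four-subgroup consisting of the classes of $\pm I$, $\pm\begin{pmatrix}0&-1\\1&0\end{pmatrix}$, $\pm\begin{pmatrix}-1&1\\1&1\end{pmatrix}$, $\pm\begin{pmatrix}1&1\\1&-1\end{pmatrix}$, and $\hat D_{\mathrm{odd}}$ is its inverse image in $\mathrm{PSL}_2(\hat{\mathbb{Z}}_{\mathrm{odd}})$ under reduction modulo $3$. *)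

From HB Require Import structures.
From mathcomp Require Import all_boot all_order all_algebra.
Set Implicit Arguments. Unset Strict Implicit. Unset Printing Implicit Defensive.
Import Order.TTheory GRing.Theory Num.Theory.
Local Open Scope ring_scope.

Notation mxZ := ('M[int]_2).

Definition mx2 (a b c d : int) : mxZ :=
  \matrix_(i < 2, j < 2)
    if (i == 0 :> nat) then (if (j == 0 :> nat) then a else b)
    else (if (j == 0 :> nat) then c else d).

Definition eqmod_mx (n : nat) (A B : mxZ) : Prop :=
  forall i j, (A i j = B i j %[mod n%:Z])%Z.

(* A = +-B modulo n : equality of the images in PSL_2(Z/nZ) *)
Definition pm_eqmod (n : nat) (A B : mxZ) : Prop :=
  eqmod_mx n A B \/ eqmod_mx n A (- B).

(* Gamma(2) = { A in SL_2(Z) | A = I mod 2 }; it contains -I, so it is the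
   full preimage of \bar Gamma(2) in SL_2(Z). *)
Definition Gamma2 (A : mxZ) : Prop := \det A = 1 /\ eqmod_mx 2 A 1%:M.

(* subgroup of SL_2(Z) generated by a set S of determinant-one matrices
   (inverse of a det-1 matrix is its adjugate) *)
Inductive gen_sub (S : mxZ -> Prop) : mxZ -> Prop :=
  | gen_base A : S A -> gen_sub S A
  | gen_one : gen_sub S 1%:M
  | gen_mul A B : gen_sub S A -> gen_sub S B -> gen_sub S (A *m B)
  | gen_inv A : gen_sub S A -> gen_sub S (\adj A).

Definition commSL (A B : mxZ) : mxZ := \adj A *m \adj B *m A *m B.

(* LCS k = preimage in SL_2(Z) of the k-th lower central series term
   \bar Gamma(2)_k of \bar Gamma(2) = Gamma(2)/{+-1}:
   LCS 1 = Gamma(2), LCS (k+1) = < -I, [a,b] : a in LCS k, b in Gamma(2) >. *)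
Fixpoint LCS (k : nat) : mxZ -> Prop :=
  match k with
  | 0 | 1 => Gamma2
  | k'.+1 => gen_sub (fun C => C = - 1%:M \/
                      exists a b, LCS k' a /\ Gamma2 b /\ C = commSL a b)
  end.

(* \hat Z_odd = lim_{n odd} Z/nZ : compatible families z n (n odd) *)
Definition zhat_odd (z : nat -> int) : Prop :=
  forall m n, odd n -> (m %| n)%N -> (z n = z m %[mod m%:Z])%Z.

(* an element of SL_2(\hat Z_odd): a family X n (n odd) of integer
   matrices, entrywise in \hat Z_odd, with det = 1 mod n.  Its class in
   PSL_2(\hat Z_odd) is {X, -X}. *)
Definition SL2_Zodd (X : nat -> mxZ) : Prop :=
  (forall i j, zhat_odd (fun n => X n i j)) /\
  (forall n, odd n -> (\det (X n) = 1 %[mod n%:Z])%Z).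

(* The class of X lies in the closure, in PSL_2(\hat Z_odd) with its
   profinite topology, of the image of H (a subset of SL_2(Z)).  Basic
   neighbourhoods of the class of X are the classes of the Y with
   Y = +-X modulo n (n odd). *)
Definition in_closure (H : mxZ -> Prop) (X : nat -> mxZ) : Prop :=
  forall n, odd n -> exists h, H h /\ pm_eqmod n h (X n).

Definition D3 : seq mxZ :=
  [:: 1%:M; mx2 0 (-1) 1 0; mx2 (-1) 1 1 1; mx2 1 1 1 (-1)].

Definition in_Dhat_odd (X : nat -> mxZ) : Prop :=
  exists2 d, d \in D3 & pm_eqmod 3 (X 3%N) d.

From mathcomp Require Import all_boot all_order all_algebra ring.
Set Implicit Arguments. Unset Strict Implicit. Unset Printing Implicit Defensive.
Import Order.TTheory GRing.Theory Num.Theory.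

(* Modulo 3 the commutators of SL_2(Z/3Z) lie in the quaternion group, the
   preimage of D_3; for k >= 2 the group \bar Gamma(2)_k is generated by -1 and
   commutators, so it reduces into D_3 modulo 3, and so does its closure.
   Conversely fix n odd.  As 2 is invertible modulo n, elementary matrices lift
   to Gamma(2), so Gamma(2) maps onto SL_2(Z/nZ).  By induction on k, the image
   of \bar Gamma(2)_k in PSL_2(Z/nZ) contains every matrix reducing into D_3
   modulo 3: commutators of diag(1/2, 2), which is -1 modulo 3, with elementary
   matrices give E_12(3y), E_21(3y) and diag(4, 1/4), which generate the
   matrices congruent to 1 modulo 3, and explicit commutators supply a
   representative of each class of D_3. *)

Lemma exists_coprime_addn_mul (x y z : nat) : 0 < z ->
  (forall l, prime l -> l %| z -> l %| x -> l %| y -> False) ->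
  exists t, coprime (x + t * y) z.
Proof.
move=> z_gt0 no_common.
pose t := \prod_(l <- primes z | ~~ (l %| x)) l.
have t_ndvd l : prime l -> l %| t -> ~~ (l %| x).
  move=> l_pr; rewrite Euclid_dvd_prod // big_has_cond.
  case/hasP=> l' /[!mem_primes] /and3P[l'_pr _ _] /andP[nx].
  by rewrite dvdn_prime2 // => /eqP ->.
have dvd_t l : prime l -> l %| z -> ~~ (l %| x) -> l %| t.
  move=> l_pr lz nx; rewrite /t (big_rem l) ?mem_primes ?l_pr ?z_gt0 ?lz //=.
  by rewrite nx dvdn_mulr.
exists t; apply/negPn/negP => not_coprime.
have gcd_gt1 : 1 < gcdn (x + t * y) z.
  by rewrite ltn_neqAle eq_sym not_coprime gcdn_gt0 z_gt0 orbT.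
pose l := pdiv (gcdn (x + t * y) z).
have l_pr : prime l := pdiv_prime gcd_gt1.
have l_gcd : l %| gcdn (x + t * y) z := pdiv_dvd _.
have lz : l %| z by apply: dvdn_trans l_gcd (dvdn_gcdr _ _).
have lxy : l %| x + t * y by apply: dvdn_trans l_gcd (dvdn_gcdl _ _).
have [lx | nx] := boolP (l %| x).
  move: lxy; rewrite dvdn_addr // Euclid_dvdM // => /orP[lt | ly].
    by move: (t_ndvd l l_pr lt); rewrite lx.
  exact: no_common l l_pr lz lx ly.
by move: lxy; rewrite dvdn_addl ?dvdn_mulr ?dvd_t // (negPf nx).
Qed.

Local Open Scope ring_scope.

Section Matrix2.
Variable R : comNzRingType.
Implicit Types (a b c d : R) (A B : 'M[R]_2).

Definition m2 a b c d : 'M[R]_2 :=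
  \matrix_(i < 2, j < 2)
    if (i == 0 :> nat) then (if (j == 0 :> nat) then a else b)
    else (if (j == 0 :> nat) then c else d).

Lemma m2_eta A : A = m2 (A 0 0) (A 0 1) (A 1 0) (A 1 1).
Proof.
apply/matrixP => i j; rewrite !mxE.
by case: i => [[|[|//]] ?]; case: j => [[|[|//]] ?]; congr (A _ _); apply: val_inj.
Qed.

Lemma eq_mx2 A B : A 0 0 = B 0 0 -> A 0 1 = B 0 1 -> A 1 0 = B 1 0 -> A 1 1 = B 1 1 ->
  A = B.
Proof. by move=> *; rewrite [A]m2_eta [B]m2_eta; congr m2. Qed.

Lemma mul_m2 a b c d a' b' c' d' :
  m2 a b c d *m m2 a' b' c' d' =
  m2 (a * a' + b * c') (a * b' + b * d') (c * a' + d * c') (c * b' + d * d').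
Proof.
apply/matrixP => i j; rewrite !mxE !big_ord_recr big_ord0 /= !mxE add0r.
by case: i => [[|[|//]] ?]; case: j => [[|[|//]] ?].
Qed.

Lemma det_m2 a b c d : \det (m2 a b c d) = a * d - b * c.
Proof.
rewrite (expand_det_row _ 0) !big_ord_recr big_ord0 /= add0r.
by rewrite /cofactor !det_mx11 !mxE /= expr0 expr1 !mul1r mulN1r mulrN.
Qed.

Lemma adj_m2 a b c d : \adj (m2 a b c d) = m2 d (- b) (- c) a.
Proof.
apply/matrixP => i j; rewrite !mxE /cofactor det_mx11 !mxE.
by case: i => [[|[|//]] ?]; case: j => [[|[|//]] ?];
  rewrite /= ?expr0 ?expr1 ?mul1r ?mulN1r ?expr2 ?mulrNN ?mul1r.
Qed.

Lemma m2_1 : 1%:M = m2 1 0 0 1.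
Proof. by apply: eq_mx2; rewrite !mxE. Qed.

Lemma opp_m2 a b c d : - m2 a b c d = m2 (- a) (- b) (- c) (- d).
Proof. by apply: eq_mx2; rewrite !mxE. Qed.

Lemma add_m2 a b c d a' b' c' d' :
  m2 a b c d + m2 a' b' c' d' = m2 (a + a') (b + b') (c + c') (d + d').
Proof. by apply: eq_mx2; rewrite !mxE. Qed.

Lemma muln_m2 a b c d k :
  m2 a b c d *+ k = m2 (a *+ k) (b *+ k) (c *+ k) (d *+ k).
Proof. by apply: eq_mx2; rewrite !(mulmxnE, mxE). Qed.

Lemma adj2N A : \adj (- A) = - \adj A.
Proof. by rewrite [A]m2_eta opp_m2 !adj_m2 opp_m2 opprK. Qed.

Lemma adj2D A B : \adj (A + B) = \adj A + \adj B.
Proof. by rewrite [A]m2_eta [B]m2_eta add_m2 !adj_m2 add_m2 !opprD. Qed.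

Lemma adj2Mn A k : \adj (A *+ k) = \adj A *+ k.
Proof. by rewrite [A]m2_eta muln_m2 !adj_m2 muln_m2 !mulNrn. Qed.

Lemma det2N A : \det (- A) = \det A.
Proof. by rewrite [A]m2_eta opp_m2 !det_m2 mulrNN mulrNN. Qed.

Lemma det_adj2 A : \det (\adj A) = \det A.
Proof. by rewrite [A]m2_eta adj_m2 !det_m2 mulrNN mulrC [_ * _]mulrC. Qed.

Definition comm2 A B := \adj A *m \adj B *m A *m B.

Lemma comm2Nl A B : comm2 (- A) B = comm2 A B.
Proof. by rewrite /comm2 adj2N !(mulNmx, mulmxN) opprK. Qed.

Lemma det_comm2 A B : \det (comm2 A B) = (\det A * \det B) ^+ 2.
Proof. by rewrite /comm2 !det_mulmx !det_adj2; ring. Qed.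

Lemma comm2_diag_E12 h t y : h * t = 1 ->
  comm2 (m2 h 0 0 t) (m2 1 (- y) 0 1) = m2 1 ((t * t - 1) * y) 0 1.
Proof. by move=> ht; rewrite /comm2 !adj_m2 !mul_m2; congr m2; ring: ht. Qed.

Lemma comm2_diag_E21 h t y : h * t = 1 ->
  comm2 (m2 h 0 0 t) (m2 1 0 (t * t * y) 1) = m2 1 0 ((t * t - 1) * y) 1.
Proof. by move=> ht; rewrite /comm2 !adj_m2 !mul_m2; congr m2; ring: ht. Qed.

Lemma comm2_diag_S h t : h * t = 1 ->
  comm2 (m2 h 0 0 t) (m2 0 (- 1) 1 0) = m2 (t * t) 0 0 (h * h).
Proof. by move=> ht; rewrite /comm2 !adj_m2 !mul_m2; congr m2; ring: ht. Qed.

End Matrix2.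

Lemma map_m2 (R S : comNzRingType) (f : R -> S) a b c d :
  map_mx f (m2 a b c d) = m2 (f a) (f b) (f c) (f d).
Proof. by apply: eq_mx2; rewrite !mxE. Qed.

Lemma intr_Zp_eq0 (N : nat) (z : int) : (1 < N)%N ->
  (z%:~R == 0 :> 'Z_N) = (N%:Z %| z)%Z.
Proof.
move=> N_gt1; have natr_eq0 (k : nat) : (k%:R == 0 :> 'Z_N) = (N %| k)%N.
  by rewrite -val_eqE /= val_Zp_nat.
by case: z => k; rewrite ?NegzE ?rmorphN ?oppr_eq0 dvdzE natr_eq0.
Qed.

Lemma eqmodz_Zp (N : nat) (x y : int) : (1 < N)%N ->
  (x = y %[mod N%:Z])%Z <-> (x%:~R = y%:~R :> 'Z_N).
Proof.
move=> N_gt1; split=> [/eqP | /eqP].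
  by rewrite eqz_mod_dvd -intr_Zp_eq0 // rmorphB subr_eq0 => /eqP.
by rewrite -subr_eq0 -rmorphB intr_Zp_eq0 // -eqz_mod_dvd => /eqP.
Qed.

Lemma commSLE : commSL = @comm2 int.
Proof. by []. Qed.

Lemma mx2E : mx2 = @m2 int.
Proof. by []. Qed.

Lemma D3_det d : d \in D3 -> (\det d = 1 %[mod 3])%Z.
Proof. by rewrite !inE => /or4P[] /eqP ->; rewrite ?det1 // mx2E det_m2. Qed.

Definition mxZp (N : nat) (A : 'M[int]_2) : 'M['Z_N]_2 := map_mx (fun z => z%:~R) A.

Section ReduceMatrix.
Variable N : nat.
Implicit Types A B : 'M[int]_2.

Lemma mxZpM A B : mxZp N (A *m B) = mxZp N A *m mxZp N B.
Proof. exact: map_mxM. Qed.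
Lemma mxZp_adj A : mxZp N (\adj A) = \adj (mxZp N A).
Proof. exact: map_mx_adj. Qed.
Lemma mxZp_det A : \det (mxZp N A) = (\det A)%:~R.
Proof. exact: det_map_mx. Qed.
Lemma mxZpN A : mxZp N (- A) = - mxZp N A.
Proof. exact: map_mxN. Qed.
Lemma mxZp1 : mxZp N 1%:M = 1%:M.
Proof. exact: map_mx1. Qed.
Lemma mxZp_comm A B : mxZp N (commSL A B) = comm2 (mxZp N A) (mxZp N B).
Proof. by rewrite commSLE /comm2 !mxZpM !mxZp_adj. Qed.
Lemma mxZp_mx2 a b c d : mxZp N (mx2 a b c d) = m2 a%:~R b%:~R c%:~R d%:~R.
Proof. exact: map_m2. Qed.

Hypothesis N_gt1 : (1 < N)%N.

Lemma eqmod_mx_Zp A B : eqmod_mx N A B <-> mxZp N A = mxZp N B.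
Proof.
split=> [E | /matrixP E i j]; last by apply/eqmodz_Zp => //; move: (E i j); rewrite !mxE.
by apply/matrixP => i j; rewrite !mxE; apply/eqmodz_Zp.
Qed.

Lemma pm_eqmod_Zp A B :
  pm_eqmod N A B <-> mxZp N A = mxZp N B \/ mxZp N A = - mxZp N B.
Proof. by rewrite /pm_eqmod !eqmod_mx_Zp // mxZpN. Qed.

Lemma pm_eqmod_trans A B C : pm_eqmod N A B -> pm_eqmod N A C -> pm_eqmod N B C.
Proof.
rewrite !pm_eqmod_Zp // => -[] AB [] AC.
- by left; rewrite -AB AC.
- by right; rewrite -AB AC.
- by right; rewrite -AC AB opprK.
- by left; apply: oppr_inj; rewrite -AB -AC.
Qed.

End ReduceMatrix.

Lemma Gamma2M A B : Gamma2 A -> Gamma2 B -> Gamma2 (A *m B).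
Proof.
move=> [dA /eqmod_mx_Zp-/(_ isT) mA] [dB /eqmod_mx_Zp-/(_ isT) mB].
split; first by rewrite det_mulmx dA dB mulr1.
by apply/eqmod_mx_Zp => //; rewrite mxZpM mA mB mxZp1 mulmx1.
Qed.

Lemma det_LCS k A : LCS k A -> \det A = 1.
Proof.
elim: k A => [A [] // | [_ A [] // | k IH A]].
elim=> [C [-> | [a [b [/IH da [[db _] ->]]]]] | | {}A B _ dA _ dB | {}A _ dA].
- by rewrite det2N det1.
- by rewrite commSLE det_comm2 da db !mulr1 expr1n.
- by rewrite det1.
- by rewrite det_mulmx dA dB mulr1.
- by rewrite det_adj2.
Qed.

Section CongruenceMatrix.
Variables (R : comNzRingType) (c : nat).
Implicit Types A B : 'M[R]_2.

Definition congmx A B := exists M, A = B + M *+ c.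

Lemma congmx_refl A : congmx A A.
Proof. by exists 0; rewrite mul0rn addr0. Qed.

Lemma congmx_trans A B C : congmx A B -> congmx B C -> congmx A C.
Proof. by case=> M -> [M' ->]; exists (M' + M); rewrite mulrnDl addrA. Qed.

Lemma congmxN A B : congmx A B -> congmx (- A) (- B).
Proof. by case=> M ->; exists (- M); rewrite opprD mulNrn. Qed.

Lemma congmx_adj A B : congmx A B -> congmx (\adj A) (\adj B).
Proof. by case=> M ->; exists (\adj M); rewrite adj2D adj2Mn. Qed.

Lemma congmxM A B A' B' : congmx A B -> congmx A' B' -> congmx (A *m A') (B *m B').
Proof.
case=> M -> [M' ->]; exists (B *m M' + M *m B' + M *m M' *+ c).
by rewrite !mulmxE mulrDl !mulrDr !mulrnAl !mulrnAr !mulrnDl !addrA.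
Qed.

Definition pm_congmx A B := congmx A B \/ congmx A (- B).

Lemma pm_congmx_trans A B C : pm_congmx A B -> pm_congmx B C -> pm_congmx A C.
Proof.
move=> [AB | AB] [BC | BC].
- by left; apply: congmx_trans AB BC.
- by right; apply: congmx_trans AB BC.
- by right; apply: congmx_trans AB (congmxN BC).
- by left; rewrite -[C]opprK; apply: congmx_trans AB (congmxN BC).
Qed.

Lemma pm_congmxM A B A' B' :
  pm_congmx A B -> pm_congmx A' B' -> pm_congmx (A *m A') (B *m B').
Proof.
by move=> [AB | AB] [AB' | AB']; have := congmxM AB AB';
  rewrite ?mulNmx ?mulmxN ?opprK; [left | right | right | left].
Qed.

Lemma pm_congmx_adj A B : pm_congmx A B -> pm_congmx (\adj A) (\adj B).
Proof. by case=> /congmx_adj; rewrite ?adj2N; [left | right]. Qed.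

End CongruenceMatrix.

Lemma congmx_unit (R : comUnitRingType) (c : nat) (A B : 'M[R]_2) :
  (c%:R : R) \is a GRing.unit -> congmx c A B.
Proof.
move=> c_unit; exists ((c%:R)^-1 *: (A - B)).
by rewrite scalerMnl -mulr_natr mulVr // scale1r addrC subrK.
Qed.

Lemma eqmod_mx_congmx (n c : nat) (A B : 'M[int]_2) :
  eqmod_mx c A B -> congmx c (mxZp n A) (mxZp n B).
Proof.
move=> AB; exists (mxZp n (\matrix_(i, j) ((A i j - B i j) %/ c)%Z)).
apply/matrixP => i j; rewrite !(mxE, mulmxnE) -mulr_natr.
have /divzK dvd_c : (c%:Z %| A i j - B i j)%Z by rewrite -eqz_mod_dvd; apply/eqP/AB.
set q := (_ %/ c)%Z in dvd_c *.
by rewrite -[A i j](subrK (B i j)) -dvd_c intrD intrM addrC.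
Qed.

Lemma pm_eqmod_congmx (n c : nat) (A B : 'M[int]_2) :
  pm_eqmod c A B -> pm_congmx c (mxZp n A) (mxZp n B).
Proof. by case=> /(eqmod_mx_congmx n); rewrite ?mxZpN; [left | right]. Qed.

Section ZpReduction.
Variables n l : nat.
Hypotheses (n_gt0 : (0 < n)%N) (l_prime : prime l) (l_dvd_n : (l %| n)%N).

Definition Zp_reduce (x : 'Z_n) : 'F_l := (val x)%:R.

Let l_char : l \in [pchar 'F_l] := pchar_Fp l_prime.

Lemma Zp_reduce_nat k : Zp_reduce k%:R = k%:R.
Proof.
have n_gt1 : (1 < n)%N := leq_trans (prime_gt1 l_prime) (dvdn_leq n_gt0 l_dvd_n).
rewrite /Zp_reduce /= val_Zp_nat // [in RHS](divn_eq k n) natrD natrM.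
by rewrite -[n](divnK l_dvd_n) natrM (pcharf0 l_char) !mulr0 add0r.
Qed.

Lemma Zp_reduce1 : Zp_reduce 1 = 1.
Proof. by rewrite -(natr_Zp 1) Zp_reduce_nat. Qed.

Lemma Zp_reduceD x y : Zp_reduce (x + y) = Zp_reduce x + Zp_reduce y.
Proof. by rewrite -[x]natr_Zp -[y]natr_Zp -natrD !Zp_reduce_nat natrD. Qed.

Lemma Zp_reduceM x y : Zp_reduce (x * y) = Zp_reduce x * Zp_reduce y.
Proof. by rewrite -[x]natr_Zp -[y]natr_Zp -natrM !Zp_reduce_nat natrM. Qed.

Lemma Zp_reduce_eq0 x : (Zp_reduce x == 0) = (l %| x)%N.
Proof. by rewrite (dvdn_pcharf l_char). Qed.

End ZpReduction.

Lemma exists_unit_addr_mul (n : nat) (p y : 'Z_n) : (1 < n)%N ->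
  (forall l, prime l -> (l %| n)%N ->
     Zp_reduce l p = 0 -> Zp_reduce l y = 0 -> False) ->
  exists t : nat, p + t%:R * y \is a GRing.unit.
Proof.
move=> n_gt1 no_common.
have [t cop] : exists t, coprime (val p + t * val y) n.
  apply: exists_coprime_addn_mul (ltnW n_gt1) _ => l l_pr ln lp ly.
  by apply: (no_common l l_pr ln); apply/eqP; rewrite Zp_reduce_eq0.
by exists t; rewrite -[p]natr_Zp -[y]natr_Zp -natrM -natrD unitZpE // coprime_sym.
Qed.

Lemma exists_unit_shift (n c : nat) (a q r s : 'Z_n) : (1 < n)%N ->
  (1 + c%:R * a) * s = 1 + q * r ->
  exists t : nat, 1 + c%:R * a + t%:R * (c%:R * r) \is a GRing.unit.
Proof.
move=> n_gt1 ps; apply: (exists_unit_addr_mul n_gt1) => l l_pr l_n.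
have red1 := Zp_reduce1 (ltnW n_gt1) l_pr l_n.
have redD := Zp_reduceD (ltnW n_gt1) l_pr l_n.
have redM := Zp_reduceM (ltnW n_gt1) l_pr l_n.
rewrite !(redD, redM) red1 => red_p /eqP.
rewrite mulf_eq0 => /orP[/eqP red_c | /eqP red_r].
  by move/eqP: red_p; rewrite red_c mul0r addr0 oner_eq0.
move/(congr1 (Zp_reduce l)): ps; rewrite !(redD, redM) red1 red_p red_r.
by rewrite !(mul0r, mulr0) addr0 => /eqP; rewrite eq_sym oner_eq0.
Qed.

Section OddModulus.
Variable n : nat.
Hypotheses (n_odd : odd n) (n_gt1 : (1 < n)%N).
Local Notation R := 'Z_n.

Definition half : R := (n.+1)./2%:R.

Lemma mul2_half : 2 * half = 1.
Proof.
rewrite -natrM mul2n.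
have -> : ((n.+1)./2).*2 = n.+1 by rewrite -[RHS]odd_double_half /= n_odd.
by rewrite -addn1 natrD pchar_Zp // add0r.
Qed.

Lemma mul4_half2 : 4 * half ^+ 2 = 1.
Proof.
have -> : 4 = 2 * 2 :> R by rewrite -natrM.
by rewrite expr2 mulrACA mul2_half mulr1.
Qed.

Section Generation.
Variables (P : 'M[R]_2 -> Prop) (c : nat).
Local Notation C := (c%:R : R).
Hypotheses (c13 : c = 1%N \/ c = 3%N)
  (PM : forall A B, P A -> P B -> P (A *m B))
  (P_E12 : forall y, P (m2 1 (C * y) 0 1))
  (P_E21 : forall y, P (m2 1 0 (C * y) 1))
  (P_diag4 : P (m2 4 0 0 (half ^+ 2))).

Lemma P_diag_sq u v w : u * v = 1 -> C * C * w = u - 1 -> P (m2 u 0 0 v).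
Proof.
move=> uv u_def.
have -> : m2 u 0 0 v = m2 1 0 (C * - (w * v)) 1 *m m2 1 (C * 1) 0 1
                        *m m2 1 0 (C * w) 1 *m m2 1 (C * - v) 0 1.
  by rewrite !mul_m2; congr m2; ring: uv u_def.
by do 3?apply: PM.
Qed.

Lemma P_1 : P 1%:M.
Proof. by move: (P_E12 0); rewrite mulr0 -m2_1. Qed.

Lemma P_diag4X j : P (m2 (4 ^+ j) 0 0 (half ^+ 2 ^+ j)).
Proof.
elim: j => [|j IHj]; first by rewrite !expr0 -m2_1; apply: P_1.
have -> : m2 (4 ^+ j.+1) 0 0 (half ^+ 2 ^+ j.+1) =
          m2 4 0 0 (half ^+ 2) *m m2 (4 ^+ j) 0 0 (half ^+ 2 ^+ j).
  by rewrite mul_m2 !(mulr0, mul0r, addr0, add0r) -!exprS.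
exact: PM.
Qed.

(* 1/4 is 1 modulo 3 and has order 3 modulo 9: this is where c = 1 or 3 is used. *)
Lemma exists_mul_half_pow a :
  exists j w, (1 + C * a) * half ^+ 2 ^+ j = 1 + C * C * w.
Proof.
case: c13 => ->; first by exists 0%N, a; rewrite expr0; ring.
rewrite -[a]natr_Zp (divn_eq (val a) 3) natrD natrM.
set q : R := ((val a) %/ 3)%:R.
have : ((val a) %% 3 < 3)%N by rewrite ltn_mod.
case: ((val a) %% 3)%N => [|[|[|//]]] _.
- by exists 0%N, q; rewrite expr0; ring.
- exists 1%N, (q * half ^+ 2).
  transitivity (4 * half ^+ 2 + 3%:R * 3%:R * (q * half ^+ 2)); first by ring.
  by rewrite mul4_half2.
- exists 2%N, ((q - 1) * half ^+ 2 ^+ 2).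
  transitivity ((4 * half ^+ 2) ^+ 2 + 3%:R * 3%:R * ((q - 1) * half ^+ 2 ^+ 2)).
    by ring.
  by rewrite mul4_half2 expr1n.
Qed.

Lemma P_diag p u : p * u = 1 -> (exists a, p = 1 + C * a) -> P (m2 p 0 0 u).
Proof.
move=> pu [a p_def]; have [j [w pw]] := exists_mul_half_pow a; rewrite -p_def in pw.
have F : half ^+ 2 ^+ j * 4 ^+ j = 1 by rewrite -exprMn mulrC mul4_half2 expr1n.
have -> : m2 p 0 0 u = m2 (4 ^+ j) 0 0 (half ^+ 2 ^+ j) *m
                       m2 (p * half ^+ 2 ^+ j) 0 0 (u * 4 ^+ j).
  rewrite mul_m2 !(mulr0, mul0r, addr0, add0r); congr m2.
    by rewrite mulrCA [4 ^+ j * _]mulrC F mulr1.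
  by rewrite mulrCA F mulr1.
apply: PM; first exact: P_diag4X.
apply: (@P_diag_sq _ _ w); first by rewrite mulrACA pu F mulr1.
by rewrite pw addrAC subrr add0r.
Qed.

(* Make the top-left entry a unit by an upper elementary factor, then factor the
   rest as lower * diagonal * upper. *)
Lemma P_congmx M : \det M = 1 -> congmx c M 1%:M -> P M.
Proof.
move=> + [N M_def].
have -> : M = m2 (1 + C * N 0 0) (C * N 0 1) (C * N 1 0) (1 + C * N 1 1).
  by rewrite M_def [N in N *+ _]m2_eta m2_1 muln_m2 add_m2 !mulr_natl !add0r.
move: (N 0 0) (N 0 1) (N 1 0) (N 1 1) => a b e f; rewrite det_m2 => det1.
set p := 1 + C * a; set q := C * b; set r := C * e; set s := 1 + C * f.
have ps : p * s = 1 + q * r by rewrite -det1 subrK.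
have [t p1_unit] := exists_unit_shift n_gt1 ps.
set T : R := t%:R; set p1 := p + T * (C * r); set q1 := C * (b + T * s).
have -> : m2 p q r s = m2 1 (C * - T) 0 1 *m m2 p1 q1 r s.
  by rewrite mul_m2; congr m2; rewrite /p1 /q1 /q; ring.
apply: PM; first exact: P_E12.
set u := p1^-1; have p1u : p1 * u = 1 by rewrite mulrV.
have p1s : p1 * s = 1 + q1 * r by rewrite /p1 /q1 mulrDl ps /q; ring.
have -> : m2 p1 q1 r s = m2 1 0 (C * (e * u)) 1 *m m2 p1 0 0 u *m m2 1 (C * (u * (b + T * s))) 0 1.
  have s_def : s = u * (1 + q1 * r) by rewrite -p1s mulrA [u * p1]mulrC p1u mul1r.
  by rewrite !mul_m2; congr m2; [ | rewrite /q1 | rewrite /r | rewrite {1}s_def /q1 /r];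
    ring: p1u.
apply: PM; first apply: PM.
- exact: P_E21.
- by apply: P_diag => //; exists (a + T * (C * e)); rewrite /p1 /p /r; ring.
- exact: P_E12.
Qed.

End Generation.

Definition Gamma2_Zp (M : 'M[R]_2) := exists Z, Gamma2 Z /\ mxZp n Z = M.

Lemma Gamma2_ZpM A B : Gamma2_Zp A -> Gamma2_Zp B -> Gamma2_Zp (A *m B).
Proof.
move=> [Z [gZ <-]] [Z' [gZ' <-]].
by exists (Z *m Z'); split; [apply: Gamma2M | apply: mxZpM].
Qed.

Lemma Gamma2_Zp_elementary y : Gamma2_Zp (m2 1 y 0 1) /\ Gamma2_Zp (m2 1 0 y 1).
Proof.
pose k := (2 * ((n.+1)./2 * val y))%N.
have k_y : k%:Z%:~R = y :> R.
  by rewrite -[LHS]/(k%:R) !natrM natr_Zp mulrA mul2_half mul1r.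
have k_2 : k%:Z%:~R = 0 :> 'Z_2 by rewrite -[LHS]/(k%:R) natrM pchar_Zp // mul0r.
have detE a b c d : \det (mx2 a b c d) = a * d - b * c by apply: det_m2.
split; [exists (mx2 1 k 0 1) | exists (mx2 1 0 k 1)];
  (split; [split; [rewrite detE; ring | apply/eqmod_mx_Zp => //] |]);
  by rewrite !mxZp_mx2 ?k_y ?k_2 ?rmorph0 ?rmorph1 -?m2_1 ?mxZp1.
Qed.

Lemma Gamma2_Zp_onto M : \det M = 1 -> Gamma2_Zp M.
Proof.
have E12 y : Gamma2_Zp (m2 1 (1%:R * y) 0 1) by rewrite mul1r; case: (Gamma2_Zp_elementary y).
have E21 y : Gamma2_Zp (m2 1 0 (1%:R * y) 1) by rewrite mul1r; case: (Gamma2_Zp_elementary y).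
move=> detM; apply: (P_congmx (or_introl erefl) Gamma2_ZpM E12 E21) => //.
  by apply: (P_diag_sq Gamma2_ZpM E12 E21 (w := 3)); [apply: mul4_half2 | ring].
by apply: congmx_unit; rewrite unitr1.
Qed.

Definition LCS_Zp k (M : 'M[R]_2) :=
  exists H, LCS k H /\ (mxZp n H = M \/ mxZp n H = - M).

Lemma LCS_ZpN k M : LCS_Zp k M -> LCS_Zp k (- M).
Proof. by case=> H [LH [E | E]]; exists H; rewrite E ?opprK; split; [|right| |left]. Qed.

Lemma LCS_ZpM k A B : (2 <= k)%N -> LCS_Zp k A -> LCS_Zp k B -> LCS_Zp k (A *m B).
Proof.
case: k => [|[|k]] // _ [H [LH EH]] [H' [LH' EH']].
exists (H *m H'); split; first exact: gen_mul.
by rewrite mxZpM; case: EH => ->; case: EH' => ->;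
  rewrite ?mulNmx ?mulmxN ?opprK; [left | right | right | left].
Qed.

Lemma LCS_Zp_comm k A B :
  (0 < k)%N -> LCS_Zp k A -> \det B = 1 -> LCS_Zp k.+1 (comm2 A B).
Proof.
case: k => [|k] // _ [H [LH EH]] /Gamma2_Zp_onto[Z [gZ EZ]].
exists (commSL H Z); split; first by apply: gen_base; right; exists H, Z.
by left; rewrite mxZp_comm EZ; case: EH => ->; rewrite ?comm2Nl.
Qed.

Lemma LCS_Zp1 M : \det M = 1 -> LCS_Zp 1 M.
Proof. by case/Gamma2_Zp_onto=> Z [gZ EZ]; exists Z; split; last left. Qed.

Lemma LCS_Zp_congmx3 k : (0 < k)%N -> LCS_Zp k (m2 half 0 0 2) ->
  forall M, \det M = 1 -> pm_congmx 3 M 1%:M -> LCS_Zp k.+1 M.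
Proof.
move=> k_gt0 LD.
have h2 : half * 2 = 1 by rewrite mulrC mul2_half.
have LCS_comm B : \det B = 1 -> LCS_Zp k.+1 (comm2 (m2 half 0 0 2) B).
  exact: LCS_Zp_comm.
have E12 y : LCS_Zp k.+1 (m2 1 (3%:R * y) 0 1).
  have -> : m2 1 (3%:R * y) 0 1 = comm2 (m2 half 0 0 2) (m2 1 (- y) 0 1).
    by rewrite comm2_diag_E12 //; congr m2; ring.
  by apply: LCS_comm; rewrite det_m2; ring.
have E21 y : LCS_Zp k.+1 (m2 1 0 (3%:R * y) 1).
  have -> : m2 1 0 (3%:R * y) 1 = comm2 (m2 half 0 0 2) (m2 1 0 (2 * 2 * y) 1).
    by rewrite comm2_diag_E21 //; congr m2; ring.
  by apply: LCS_comm; rewrite det_m2; ring.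
have D4 : LCS_Zp k.+1 (m2 4 0 0 (half ^+ 2)).
  have -> : m2 4 0 0 (half ^+ 2) = comm2 (m2 half 0 0 2) (m2 0 (- 1) 1 0).
    by rewrite comm2_diag_S //; congr m2; ring.
  by apply: LCS_comm; rewrite det_m2; ring.
have LM A B := @LCS_ZpM k.+1 A B k_gt0.
have cong1 N : \det N = 1 -> congmx 3 N 1%:M -> LCS_Zp k.+1 N.
  exact: (P_congmx (or_intror erefl) LM E12 E21 D4).
move=> M detM [/(cong1 _ detM) // | /congmxN]; rewrite opprK => cM.
by rewrite -[M]opprK; apply/LCS_ZpN/cong1; rewrite ?det2N.
Qed.

Definition D3_Zp (M : 'M[R]_2) :=
  \det M = 1 /\ exists2 d, d \in D3 & pm_congmx 3 M (mxZp n d).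

Lemma D3_Zp_diag_half : D3_Zp (m2 half 0 0 2).
Proof.
split; first by rewrite det_m2 mulr0 subr0 mulrC mul2_half.
exists 1%:M; first by rewrite inE eqxx.
right; exists (m2 half 0 0 1); rewrite mxZp1 m2_1 opp_m2 muln_m2 add_m2.
congr m2; try ring.
by transitivity (-1 + 2 * half + half); [rewrite mul2_half addNr add0r | ring].
Qed.

Section InductionStep.
Variable k : nat.
Hypotheses (k_gt0 : (0 < k)%N) (D3_LCS : forall M, D3_Zp M -> LCS_Zp k M).

Let LCS_cong3 := LCS_Zp_congmx3 k_gt0 (D3_LCS D3_Zp_diag_half).

Lemma LCS_Zp_D3_rep d : d \in D3 ->
  exists2 r, LCS_Zp k.+1 r /\ \det r = 1 & pm_congmx 3 r (mxZp n d).
Proof.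
have unimodular a b c d' : a * d' - b * c = 1 -> \det (m2 a b c d') = 1 by rewrite det_m2.
pose S : 'M[R]_2 := m2 0 (- 1) 1 0; pose T : 'M[R]_2 := m2 1 1 0 1.
pose U : 'M[R]_2 := m2 1 1 1 2.
have LS : LCS_Zp k S.
  apply: D3_LCS; split; first by apply: unimodular; ring.
  exists (mx2 0 (-1) 1 0); first by rewrite !inE eqxx orbT.
  by left; rewrite mxZp_mx2 rmorph0 rmorph1 rmorphN1; apply: congmx_refl.
have LU : LCS_Zp k U.
  apply: D3_LCS; split; first by apply: unimodular; ring.
  exists (mx2 1 1 1 (-1)); first by rewrite !inE eqxx !orbT.
  left; exists (m2 0 0 0 1); rewrite mxZp_mx2 rmorph1 rmorphN1 muln_m2 add_m2.
  by congr m2; ring.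
have r4E : comm2 S T = U by rewrite /comm2 !adj_m2 !mul_m2; congr m2; ring.
have r3E : comm2 U T = m2 (-1) (-5) 1 4 by rewrite /comm2 !adj_m2 !mul_m2; congr m2; ring.
have L4 : LCS_Zp k.+1 U by rewrite -r4E; apply: LCS_Zp_comm => //; apply: unimodular; ring.
have L3 : LCS_Zp k.+1 (m2 (-1) (-5) 1 4).
  by rewrite -r3E; apply: LCS_Zp_comm => //; apply: unimodular; ring.
(* [S, T] = U and [U, T] reduce to the last two elements of D3, their product to -S. *)
rewrite !inE => /or4P[] /eqP ->.
- exists 1%:M; last by left; rewrite mxZp1; apply: congmx_refl.
  split; last exact: det1.
  by apply: LCS_cong3; [exact: det1 | left; apply: congmx_refl].
- exists (m2 (-1) (-5) 1 4 *m U); first split.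
  + exact: LCS_ZpM.
  + by rewrite det_mulmx !unimodular ?mulr1 //; ring.
  right; exists (m2 (-2) (-4) 2 3); rewrite mxZp_mx2 rmorph0 rmorph1 rmorphN1.
  by rewrite mul_m2 opp_m2 muln_m2 add_m2; congr m2; ring.
- exists (m2 (-1) (-5) 1 4); first by split=> //; apply: unimodular; ring.
  left; exists (m2 0 (-2) 0 1); rewrite mxZp_mx2 rmorph1 rmorphN1 muln_m2 add_m2.
  by congr m2; ring.
- exists U; first by split=> //; apply: unimodular; ring.
  left; exists (m2 0 0 0 1); rewrite mxZp_mx2 rmorph1 rmorphN1 muln_m2 add_m2.
  by congr m2; ring.
Qed.

Lemma LCS_Zp_D3_step M : D3_Zp M -> LCS_Zp k.+1 M.
Proof.
move=> [detM [d dD3 Md]]; have [r [Lr detr] rd] := LCS_Zp_D3_rep dD3.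
have -> : M = M *m \adj r *m r by rewrite -mulmxA mul_adj_mx detr mulmx1.
apply: LCS_ZpM Lr => //; apply: LCS_cong3.
  by rewrite det_mulmx det_adj2 detM detr mulr1.
have := pm_congmxM Md (pm_congmx_adj rd).
rewrite -mxZp_adj -mxZpM mul_mx_adj => /pm_congmx_trans; apply.
rewrite -mxZp1; apply/pm_eqmod_congmx; left=> i j; rewrite !mxE.
by case: (i == j); rewrite ?mulr1n ?mulr0n //; apply: D3_det.
Qed.

End InductionStep.

Lemma D3_Zp_sub_LCS_Zp k M : (0 < k)%N -> D3_Zp M -> LCS_Zp k M.
Proof.
elim: k M => [//|[_ M _ [detM _] | k IHk M _]]; first exact: LCS_Zp1.
exact: (@LCS_Zp_D3_step k.+1 isT (fun N => IHk N isT)).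
Qed.

End OddModulus.

(* Matrices are locked, so the finite checks over Z/3Z run on quadruples of entries. *)
Definition quad := ('Z_3 * 'Z_3 * 'Z_3 * 'Z_3)%type.

Definition quad_of (A : 'M['Z_3]_2) : quad := (A 0 0, A 0 1, A 1 0, A 1 1).

Definition qmul (x y : quad) : quad :=
  let: (a, b, c, d) := x in let: (a', b', c', d') := y in
  (a * a' + b * c', a * b' + b * d', c * a' + d * c', c * b' + d * d').
Definition qadj (x : quad) : quad := let: (a, b, c, d) := x in (d, - b, - c, a).
Definition qopp (x : quad) : quad := let: (a, b, c, d) := x in (- a, - b, - c, - d).
Definition qdet (x : quad) : 'Z_3 := let: (a, b, c, d) := x in a * d - b * c.
Definition qcomm (x y : quad) : quad := qmul (qmul (qmul (qadj x) (qadj y)) x) y.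

Section QuadOf.
Implicit Types A B : 'M['Z_3]_2.

Lemma quad_of_m2 a b c d : quad_of (m2 a b c d) = (a, b, c, d).
Proof. by rewrite /quad_of !mxE. Qed.

Lemma quad_of_inj : injective quad_of.
Proof. by move=> A B; rewrite [A]m2_eta [B]m2_eta !quad_of_m2 => -[-> -> -> ->]. Qed.

Lemma quad_ofM A B : quad_of (A *m B) = qmul (quad_of A) (quad_of B).
Proof. by rewrite [A]m2_eta [B]m2_eta mul_m2 !quad_of_m2. Qed.

Lemma quad_of_adj A : quad_of (\adj A) = qadj (quad_of A).
Proof. by rewrite [A]m2_eta adj_m2 !quad_of_m2. Qed.

Lemma quad_ofN A : quad_of (- A) = qopp (quad_of A).
Proof. by rewrite [A]m2_eta opp_m2 !quad_of_m2. Qed.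

Lemma qdet_quad_of A : qdet (quad_of A) = \det A.
Proof. by rewrite [A]m2_eta det_m2 quad_of_m2. Qed.

Lemma quad_of_comm A B : quad_of (comm2 A B) = qcomm (quad_of A) (quad_of B).
Proof. by rewrite /comm2 !quad_ofM !quad_of_adj. Qed.

End QuadOf.

Definition Z3_elems : seq 'Z_3 := [:: 0; 1; 2].

Lemma mem_Z3_elems (x : 'Z_3) : x \in Z3_elems.
Proof.
case: x => -[|[|[|//]]] ? /[!inE]; apply/or3P;
  by [constructor 1 | constructor 2 | constructor 3]; apply/eqP/val_inj.
Qed.

Definition all_quads (P : pred quad) : bool :=
  all (fun a => all (fun b => all (fun c => all (fun d => P (a, b, c, d))
    Z3_elems) Z3_elems) Z3_elems) Z3_elems.

Lemma all_quadsP (P : pred quad) : all_quads P -> forall x, P x.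
Proof.
move=> Pall [[[a b] c] d]; move: Pall.
by move=> /allP/(_ a (mem_Z3_elems a))/allP/(_ b (mem_Z3_elems b))
          /allP/(_ c (mem_Z3_elems c))/allP/(_ d (mem_Z3_elems d)).
Qed.

Definition D3q : seq quad :=
  [:: (1, 0, 0, 1); (0, -1, 1, 0); (-1, 1, 1, 1); (1, 1, 1, -1)].

(* The quaternion group, i.e. the preimage of D_3 in SL_2(Z/3Z). *)
Definition Q8 : seq quad := D3q ++ map qopp D3q.

Lemma Q8_qcomm x y : qdet x = 1 -> qdet y = 1 -> qcomm x y \in Q8.
Proof.
have Q8_comm : all_quads (fun x => all_quads (fun y =>
  (qdet x != 1) || (qdet y != 1) || (qcomm x y \in Q8))) by vm_compute.
by move=> dx dy; move: (all_quadsP (all_quadsP Q8_comm x) y); rewrite dx dy.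
Qed.

Lemma Q8_qmul x y : x \in Q8 -> y \in Q8 -> qmul x y \in Q8.
Proof.
have Q8_mul : all (fun x => all (fun y => qmul x y \in Q8) Q8) Q8 by vm_compute.
by move=> xQ yQ; move/allP: Q8_mul => /(_ x xQ)/allP/(_ y yQ).
Qed.

Lemma Q8_qadj x : x \in Q8 -> qadj x \in Q8.
Proof.
have Q8_adj : all (fun x => qadj x \in Q8) Q8 by vm_compute.
exact: (allP Q8_adj).
Qed.

Lemma LCS_Q8 k h : (2 <= k)%N -> LCS k h -> quad_of (mxZp 3 h) \in Q8.
Proof.
case: k => [|[|k]] // _.
elim=> [C [-> | [a [b [La [[db _] ->]]]]] | | A B _ QA _ QB | A _ QA].
- by rewrite mxZpN mxZp1 quad_ofN m2_1 quad_of_m2.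
- rewrite mxZp_comm quad_of_comm; apply: Q8_qcomm;
    by rewrite qdet_quad_of mxZp_det ?(@det_LCS k.+1 a La) ?db mulr1z.
- by rewrite mxZp1 m2_1 quad_of_m2.
- by rewrite mxZpM quad_ofM; apply: Q8_qmul.
- by rewrite mxZp_adj quad_of_adj; apply: Q8_qadj.
Qed.

Lemma map_quad_of_D3 : [seq quad_of (mxZp 3 d) | d <- D3] = D3q.
Proof. by rewrite /= mxZp1 m2_1 !mxZp_mx2 !quad_of_m2 ?rmorph0 ?rmorph1 ?rmorphN1. Qed.

Lemma Q8_D3 h : quad_of (mxZp 3 h) \in Q8 -> exists2 d, d \in D3 & pm_eqmod 3 h d.
Proof.
rewrite mem_cat -map_quad_of_D3.
case/orP=> [/mapP[d dD3 hd] | /mapP[_ /mapP[d dD3 ->] hd]];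
  exists d => //; apply/pm_eqmod_Zp => //.
  by left; apply: quad_of_inj.
by right; apply: quad_of_inj; rewrite quad_ofN.
Qed.

Lemma closure_in_Dhat_odd k X :
  (2 <= k)%N -> in_closure (LCS k) X -> in_Dhat_odd X.
Proof.
move=> k_ge2 /(_ 3%N isT) [h [Lh hX]].
have [d dD3 hd] := Q8_D3 (LCS_Q8 k_ge2 Lh).
by exists d => //; apply: pm_eqmod_trans hX hd.
Qed.

Lemma in_Dhat_odd_closure k X :
  (2 <= k)%N -> SL2_Zodd X -> in_Dhat_odd X -> in_closure (LCS k) X.
Proof.
move=> k_ge2 [X_zhat X_det] [d dD3 Xd] m m_odd.
have [m_gt1 | m_le1] := ltnP 1 m; last first.
  have -> : m = 1%N by case: m m_odd m_le1 => [|[|]].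
  exists 1%:M; split; last by left=> i j; rewrite !modz1.
  by case: k k_ge2 => [|[|k]] // _; apply: gen_one.
have: D3_Zp (mxZp m (X m)).
  split; first by rewrite mxZp_det; move/(eqmodz_Zp _ _ m_gt1): (X_det m m_odd); rewrite mulr1z.
  exists d => //; have [m3 | m3] := boolP (3 %| m)%N.
    apply: pm_eqmod_congmx; apply: pm_eqmod_trans Xd => //.
    by left=> i j; apply/esym/(X_zhat i j).
  by left; apply: congmx_unit; rewrite unitZpE // coprime_sym prime_coprime.
case/(D3_Zp_sub_LCS_Zp m_odd m_gt1 (ltnW k_ge2)) => H [LH EH].
by exists H; split => //; apply/pm_eqmod_Zp.
Qed.

Theorem proposition13 (k : nat) : (2 <= k)%N ->
  forall X : nat -> 'M[int]_2, SL2_Zodd X ->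
    (in_closure (LCS k) X <-> in_Dhat_odd X).
Proof.
move=> k_ge2 X SLX; split; first exact: closure_in_Dhat_odd.
exact: in_Dhat_odd_closure.
Qed.
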